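(* Let $N,m>0$ be integers and let $u_1,\dots,u_m\in\overline{\mathbb F}_q$ (an algebraic closure of $\mathbb F_q$) be such that their minimal polynomials over $\mathbb F_q$ are pairwise distinct. Let $k_i=[\mathbb F_q(u_i):\mathbb F_q]$ and let $A(u_i)\in M_{k_i\times N}(\mathbb F_q)$ be the matrix defined by $[u_i^0,u_i^1,\dots,u_i^{N-1}]=[u_i^0,\dots,u_i^{k_i-1}]A(u_i)$. Then the $(k_1+\cdots+k_m)\times N$ matrix obtained by stacking $A(u_1),\dots,A(u_m)$ vertically has rank $\min\{k_1+\cdots+k_m,\,N\}$. *)

From HB Require Import structures.
From mathcomp Require Import all_boot all_order all_algebra all_field.
Set Implicit Arguments. Unset Strict Implicit. Unset Printing Implicit Defensive.
Import GRing.Theory.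
Local Open Scope ring_scope.

Definition ext_degree (F : finFieldType) (L : fieldExtType F) (u : L) : nat :=
  adjoin_degree 1%VS u.

Definition is_A_matrix (F : finFieldType) (L : fieldExtType F) (N : nat)
  (u : L) (A : 'M[F]_(ext_degree u, N)) : Prop :=
  forall n : 'I_N, u ^+ n = \sum_(j < ext_degree u) A j n *: u ^+ j.

(* A column vector c in F^N encodes the polynomial q_c = \sum_n c_n X^n, and by
   the defining identity of A(u) the entries of A(u) c are the coordinates of
   q_c(u) in the basis 1, u, ..., u^(k-1); so A(u) c = 0 forces the minimal
   polynomial of u to divide q_c. The minimal polynomials of the u_i are
   distinct, hence pairwise coprime, so if the stacked matrix kills c then their
   product, of degree k_1 + ... + k_m, divides q_c, whose degree is below N.
   Thus for N <= k_1 + ... + k_m the stacked matrix has full column rank N. In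
   general, the first min(k_1 + ... + k_m, N) columns of each A(u_i) form the
   matrix A(u_i) for that smaller N, which bounds the rank from below. *)
From HB Require Import structures.
From mathcomp Require Import all_boot all_order all_algebra all_field.
Set Implicit Arguments. Unset Strict Implicit. Unset Printing Implicit Defensive.
Import GRing.Theory.
Local Open Scope ring_scope.

Lemma mxrank_mulmx_inj (R : fieldType) m n (A : 'M[R]_(m, n)) :
  (forall c : 'cV_n, A *m c = 0 -> c = 0) -> \rank A = n.
Proof.
move=> A_inj; rewrite -mxrank_tr; apply/eqP.
rewrite -[_ == _]/(row_free A^T) -kermx_eq0.
apply/rowV0P => v; rewrite sub_kermx => /eqP vA0.
apply: trmx_inj; rewrite trmx0; apply: A_inj.
by rewrite -[A]trmxK -trmx_mul vA0 trmx0.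
Qed.

Lemma dvdp_prod_coprime (R : fieldType) (I : finType) (p : I -> {poly R})
    (q : {poly R}) :
  (forall i j, i != j -> coprimep (p i) (p j)) -> (forall i, p i %| q) ->
  \prod_i p i %| q.
Proof.
move=> p_coprime p_dvd; rewrite -big_enum /=.
elim: (enum I) (enum_uniq I) => [|i s IHs] /=; first by rewrite big_nil dvd1p.
case/andP=> i_notin_s s_uniq; rewrite big_cons Gauss_dvdp ?p_dvd ?IHs //.
rewrite big_seq; apply: (big_ind (coprimep (p i))) => [|q1 q2|j j_in_s].
- exact: coprimep1.
- by rewrite coprimepMr => -> ->.
- by apply: p_coprime; apply: contraNneq i_notin_s => ->.
Qed.

Section MinimalPolynomials.
Variables (F0 : fieldType) (L : fieldExtType F0) (K : {subfield L}).

Lemma coprimep_minPoly (x y : L) :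
  minPoly K x != minPoly K y -> coprimep (minPoly K x) (minPoly K y).
Proof.
move=> neq_xy; rewrite coprimep_def size_poly_eq1.
set g := gcdp _ _.
have gK : g \is a polyOver K by rewrite gcdp_polyOver ?minPolyOver.
have /orP[gx|] := minPoly_irr gK (dvdp_gcdl _ _); last by [].
have /orP[gy|] := minPoly_irr gK (dvdp_gcdr _ _); last by [].
have : minPoly K x %= minPoly K y by rewrite (eqp_trans _ gy) // eqp_sym.
by rewrite eqp_monic ?monic_minPoly // (negbTE neq_xy).
Qed.

Lemma size_prod_minPoly (I : finType) (u : I -> L) :
  size (\prod_i minPoly K (u i)) = (\sum_i adjoin_degree K (u i)).+1.
Proof.
rewrite size_prod => [|i _]; last by rewrite monic_neq0 ?monic_minPoly.
under eq_bigr do rewrite size_minPoly -addn1.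
by rewrite big_split /= sum1_card -addSn addnK.
Qed.

End MinimalPolynomials.

Section ColumnPolynomial.
Variables (F : fieldType) (L : fieldExtType F).

Definition cVpoly N (c : 'cV[F]_N) : {poly L} := map_poly (in_alg L) (rVpoly c^T).

Lemma cVpoly_over N (c : 'cV[F]_N) : cVpoly c \is a polyOver 1%VS.
Proof. by apply/polyOver1P; exists (rVpoly c^T). Qed.

Lemma size_cVpoly N (c : 'cV[F]_N) : (size (cVpoly c) <= N)%N.
Proof. by rewrite size_map_poly size_poly. Qed.

Lemma cVpoly_eq0 N (c : 'cV[F]_N) : (cVpoly c == 0) = (c == 0).
Proof.
rewrite map_poly_eq0; apply/eqP/eqP => [c0|->]; last by rewrite trmx0 linear0.
by rewrite -[c]trmxK -[c^T]rVpolyK c0 linear0 trmx0.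
Qed.

End ColumnPolynomial.

Section AMatrix.
Variables (F : finFieldType) (L : fieldExtType F).

Lemma horner_cVpoly N (u : L) (A : 'M[F]_(ext_degree u, N)) (c : 'cV[F]_N) :
  is_A_matrix A -> (cVpoly L c).[u] = \sum_j (A *m c) j 0 *: u ^+ j.
Proof.
move=> hA; rewrite (horner_coef_wide _ (size_cVpoly L c)).
under eq_bigr do rewrite coef_map coef_rVpoly_ord mxE /= mulr_algl hA scaler_sumr.
rewrite exchange_big /=; apply: eq_bigr => j _.
by rewrite mxE scaler_suml; apply: eq_bigr => n _; rewrite scalerA mulrC.
Qed.

Lemma is_A_matrix_colsub N N' (le_N'N : (N' <= N)%N) (u : L)
    (A : 'M[F]_(ext_degree u, N)) :
  is_A_matrix A -> is_A_matrix (colsub (widen_ord le_N'N) A).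
Proof.
by move=> hA n; under eq_bigr do rewrite mxE; exact: (hA (widen_ord le_N'N n)).
Qed.

Variables (m N : nat) (u : 'I_m -> L).
Hypothesis minPoly_u_inj : injective (fun i => minPoly 1%VS (u i)).
Variables (A : forall i : 'I_m, 'M[F]_(ext_degree (u i), N)).
Hypothesis A_u : forall i, is_A_matrix (A i).

Lemma prod_minPoly_dvdp (c : 'cV[F]_N) :
  \mxcol_i A i *m c = 0 -> \prod_i minPoly 1%VS (u i) %| cVpoly L c.
Proof.
rewrite mxcol_mul => Ac0; apply: dvdp_prod_coprime => [i j neq_ij|i].
  by apply: coprimep_minPoly; apply: contraNneq neq_ij => /minPoly_u_inj ->.
apply: minPoly_dvdp (cVpoly_over L c) _; apply/rootP.
have Aic0 : A i *m c = 0 by rewrite -(mxcolK (fun i => A i *m c)) Ac0 submxcol0.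
by rewrite (horner_cVpoly _ (A_u i)) Aic0 big1 // => j _; rewrite mxE scale0r.
Qed.

Lemma mxrank_mxcol_A :
  (N <= \sum_i ext_degree (u i))%N -> \rank (\mxcol_i A i) = N.
Proof.
move=> le_N_deg; apply: mxrank_mulmx_inj => c /prod_minPoly_dvdp dvd_c.
apply/eqP; rewrite -(cVpoly_eq0 L); apply: contraTT le_N_deg => c_neq0.
rewrite -ltnNge -ltnS -(size_prod_minPoly 1%VS u).
exact: leq_trans (dvdp_leq c_neq0 dvd_c) (size_cVpoly L c).
Qed.

End AMatrix.

Theorem lemma2p2 (F : finFieldType) (L : fieldExtType F) (N m : nat)
  (hN : (0 < N)%N) (hm : (0 < m)%N) (u : 'I_m -> L)
  (hdist : injective (fun i => minPoly 1%VS (u i)))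
  (A : forall i : 'I_m, 'M[F]_(ext_degree (u i), N))
  (hA : forall i, is_A_matrix (A i)) :
  \rank (\mxcol_(i < m) A i) = minn (\sum_(i < m) ext_degree (u i)) N.
Proof.
set N' := minn _ N; have le_N'N : (N' <= N)%N := geq_minr _ _.
set S : 'M[F]_(N, N') := colsub (widen_ord le_N'N) 1%:M.
apply/eqP; rewrite eqn_leq leq_min rank_leq_row rank_leq_col /=.
have <- : \rank (\mxcol_i (A i *m S)) = N'.
  apply: (mxrank_mxcol_A hdist) (geq_minl _ _) => i.
  by rewrite mulmx_colsub mulmx1; exact: is_A_matrix_colsub (hA i).
by rewrite -mxcol_mul mxrankM_maxl.
Qed.
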